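(* Let $\mu\in(0,\tfrac12]$ and consider the spatial circular restricted three-body problem in the rotating frame, with primaries fixed at $(-\mu,0,0)$ and $(1-\mu,0,0)$. Let $(x_{eq},0,0)$ be any of the three collinear Lagrange points $L_1,L_2,L_3$, and set $$c:=\frac{1-\mu}{|x_{eq}+\mu|^3}+\frac{\mu}{|x_{eq}-1+\mu|^3}.$$ Define the vertical frequency $\omega_v:=\sqrt{c}$ and the planar frequency $$\omega_p:=\Big(\beta_1+\sqrt{\beta_1^2+\beta_2}\Big)^{1/2},\qquad \beta_1=2-\tfrac12\big(U_{xx}^{eq}+U_{yy}^{eq}\big),\quad \beta_2=-U_{xx}^{eq}U_{yy}^{eq},$$ where $U_{xx}^{eq}=2c+1$, $U_{yy}^{eq}=1-c$ (so that the linearized flow at the Lagrange point has eigenvalues $\pm\lambda$ real, $\pm i\omega_p$, $\pm i\omega_v$). Then $$\omega_v<\omega_p<2\omega_v.$$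
   Context: The equations of motion of the spatial circular restricted three-body problem are $\ddot x=2\dot y+x-(1-\mu)\frac{x+\mu}{r_1^3}-\mu\frac{x-1+\mu}{r_2^3}$, $\ddot y=-2\dot x+y-\big(\frac{1-\mu}{r_1^3}+\frac{\mu}{r_2^3}\big)y$, $\ddot z=-\big(\frac{1-\mu}{r_1^3}+\frac{\mu}{r_2^3}\big)z$, with $r_1=((x+\mu)^2+y^2+z^2)^{1/2}$, $r_2=((x-1+\mu)^2+y^2+z^2)^{1/2}$. The collinear Lagrange points are the equilibria on the $x$-axis. With $U(x,y,z)=\tfrac12(x^2+y^2)+\frac{1-\mu}{r_1}+\frac{\mu}{r_2}$, the linearization at $(x_{eq},0,0)$ is $\ddot\xi-2\dot\eta=U^{eq}_{xx}\xi$, $\ddot\eta+2\dot\xi=U^{eq}_{yy}\eta$, $\ddot\zeta=U^{eq}_{zz}\zeta$, with $U^{eq}_{xx}=2c+1$, $U^{eq}_{yy}=1-c$, $U^{eq}_{zz}=-c$. *)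

From Stdlib Require Import Reals.
Open Scope R_scope.

Definition r1 (mu x y z : R) : R := sqrt ((x + mu)^2 + y^2 + z^2).
Definition r2 (mu x y z : R) : R := sqrt ((x - 1 + mu)^2 + y^2 + z^2).

Definition acc_x (mu x y z vx vy vz : R) : R :=
  2 * vy + x - (1 - mu) * (x + mu) / (r1 mu x y z)^3
             - mu * (x - 1 + mu) / (r2 mu x y z)^3.
Definition acc_y (mu x y z vx vy vz : R) : R :=
  - 2 * vx + y - ((1 - mu) / (r1 mu x y z)^3 + mu / (r2 mu x y z)^3) * y.
Definition acc_z (mu x y z vx vy vz : R) : R :=
  - ((1 - mu) / (r1 mu x y z)^3 + mu / (r2 mu x y z)^3) * z.

Definition is_equilibrium (mu x y z : R) : Prop :=
  r1 mu x y z <> 0 /\ r2 mu x y z <> 0 /\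
  acc_x mu x y z 0 0 0 = 0 /\ acc_y mu x y z 0 0 0 = 0 /\
  acc_z mu x y z 0 0 0 = 0.

Definition collinear_lagrange_point (mu xeq : R) : Prop :=
  is_equilibrium mu xeq 0 0.

Definition c_coef (mu xeq : R) : R :=
  (1 - mu) / (Rabs (xeq + mu))^3 + mu / (Rabs (xeq - 1 + mu))^3.

Definition Uxx_eq (mu xeq : R) : R := 2 * c_coef mu xeq + 1.
Definition Uyy_eq (mu xeq : R) : R := 1 - c_coef mu xeq.

Definition beta1 (mu xeq : R) : R := 2 - (Uxx_eq mu xeq + Uyy_eq mu xeq) / 2.
Definition beta2 (mu xeq : R) : R := - (Uxx_eq mu xeq * Uyy_eq mu xeq).

Definition omega_v (mu xeq : R) : R := sqrt (c_coef mu xeq).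
Definition omega_p (mu xeq : R) : R :=
  sqrt (beta1 mu xeq + sqrt ((beta1 mu xeq)^2 + beta2 mu xeq)).

(* At a collinear point write a = x + mu and b = x - 1 + mu for the signed
   offsets from the primaries, so that a - b = 1, and u = 1/|a|^3, v = 1/|b|^3.
   Since x = (1 - mu) a + mu b, the x-equation of equilibrium reads
   (1 - mu) a (u - 1) + mu b (v - 1) = 0, which gives
   a (c - 1) = mu (v - 1) and b (c - 1) = (1 - mu) (1 - u).
   In each of the three possible positions one of these right-hand sides has
   the sign of its left-hand factor, so c > 1.  Then omega_v^2 = c and
   omega_p^2 = 1 - c/2 + sqrt (9c^2/4 - 2c), and the two bounds
   c < omega_p^2 < 4c reduce to c - 1 > 0 and 18c^2 - 7c + 1 > 0. *)

From Stdlib Require Import Reals Lra Lia.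
Open Scope R_scope.

Lemma sqrt_axis_norm (t : R) : sqrt (t^2 + 0^2 + 0^2) = Rabs t.
Proof. rewrite <- sqrt_Rsqr_abs; f_equal; unfold Rsqr; ring. Qed.

Lemma inv_cube_lt1 (t : R) : 1 < t -> / t^3 < 1.
Proof.
  intros Ht; rewrite <- Rinv_1.
  assert (Hpow : 1 < t^3) by (apply Rlt_pow_R1; [lra | lia]).
  apply Rinv_lt_contravar; lra.
Qed.

Lemma inv_cube_gt1 (t : R) : 0 < t < 1 -> 1 < / t^3.
Proof.
  intros Ht; rewrite <- Rinv_1.
  assert (Hpow : 0 <= t^3 < 1) by (apply pow_lt_1_compat; [lra | lia]).
  assert (Hpos : 0 < t^3) by (apply pow_lt; lra).
  apply Rinv_lt_contravar; lra.
Qed.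

Lemma collinear_offsets_nonzero (mu x : R) :
  collinear_lagrange_point mu x -> x + mu <> 0 /\ x - 1 + mu <> 0.
Proof.
  intros [H1 [H2 _]]; unfold r1, r2 in *; rewrite !sqrt_axis_norm in *.
  split; intros E; [apply H1 | apply H2]; rewrite E; apply Rabs_R0.
Qed.

Lemma collinear_c_coef_identities (mu x : R) :
  collinear_lagrange_point mu x ->
  (x + mu) * (c_coef mu x - 1) = mu * (/ Rabs (x - 1 + mu) ^ 3 - 1) /\
  (x - 1 + mu) * (c_coef mu x - 1) = (1 - mu) * (1 - / Rabs (x + mu) ^ 3).
Proof.
  intros [_ [_ [Hx _]]]; unfold acc_x, r1, r2, c_coef, Rdiv in *.
  rewrite !sqrt_axis_norm in Hx.
  set (u := / Rabs (x + mu) ^ 3) in *; set (v := / Rabs (x - 1 + mu) ^ 3) in *.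
  assert (Heq : (1 - mu) * (x + mu) * (u - 1) + mu * (x - 1 + mu) * (v - 1) = 0)
    by lra.
  split; nra.
Qed.

Lemma c_coef_gt1 (mu x : R) :
  0 < mu < 1 -> collinear_lagrange_point mu x -> 1 < c_coef mu x.
Proof.
  intros Hmu HL.
  destruct (collinear_offsets_nonzero mu x HL) as [Ha Hb].
  destruct (collinear_c_coef_identities mu x HL) as [Ea Eb].
  destruct (Rlt_or_le (x + mu) 0) as [Hneg | Hpos].
  - assert (Hv : / Rabs (x - 1 + mu) ^ 3 < 1)
      by (apply inv_cube_lt1; rewrite Rabs_left; lra).
    nra.
  - destruct (Rlt_or_le 0 (x - 1 + mu)) as [Hbpos | Hbneg].
    + assert (Hu : / Rabs (x + mu) ^ 3 < 1)
        by (apply inv_cube_lt1; rewrite Rabs_right; lra).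
      nra.
    + assert (Hv : 1 < / Rabs (x - 1 + mu) ^ 3)
        by (apply inv_cube_gt1; rewrite Rabs_left; lra).
      nra.
Qed.

Lemma beta1_c_coef (mu x : R) : beta1 mu x = 1 - c_coef mu x / 2.
Proof. unfold beta1, Uxx_eq, Uyy_eq; field. Qed.

Lemma beta_discriminant_c_coef (mu x : R) :
  beta1 mu x ^ 2 + beta2 mu x = 9 * c_coef mu x ^ 2 / 4 - 2 * c_coef mu x.
Proof. unfold beta2, Uxx_eq, Uyy_eq; rewrite beta1_c_coef; field. Qed.

Lemma planar_frequency_sq_bounds (c : R) :
  1 < c -> c < 1 - c / 2 + sqrt (9 * c^2 / 4 - 2 * c) < 4 * c.
Proof.
  intros Hc.
  assert (HS : sqrt (9 * c^2 / 4 - 2 * c) * sqrt (9 * c^2 / 4 - 2 * c)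
               = 9 * c^2 / 4 - 2 * c) by (apply sqrt_sqrt; nra).
  pose proof (sqrt_pos (9 * c^2 / 4 - 2 * c)).
  split; nra.
Qed.

Lemma two_sqrt (c : R) : 0 <= c -> 2 * sqrt c = sqrt (4 * c).
Proof.
  intros Hc; rewrite sqrt_mult by lra.
  replace 4 with (2 * 2) by ring; rewrite sqrt_square; lra.
Qed.

Theorem mainTheorem1 (mu xeq : R) :
  0 < mu <= 1/2 ->
  collinear_lagrange_point mu xeq ->
  omega_v mu xeq < omega_p mu xeq < 2 * omega_v mu xeq.
Proof.
  intros Hmu HL.
  assert (Hc : 1 < c_coef mu xeq) by (apply c_coef_gt1; [lra | exact HL]).
  destruct (planar_frequency_sq_bounds _ Hc) as [Hlow Hhigh].
  unfold omega_v, omega_p; rewrite beta_discriminant_c_coef, beta1_c_coef.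
  rewrite two_sqrt by lra.
  split; apply sqrt_lt_1_alt; lra.
Qed.
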